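(* If $L$ is a finite ranked lattice, then $$\mathcal{M}(L,t)=t^{\mathrm{rk}(L)}\sum_{y\in L}t^{\mathrm{rk}(L)-\mathrm{rk}(y)}\,\chi(L^y,t)\,\chi\big((L^{\mathrm{op}})^y,t^{-1}\big).$$
   Context: $L$ has minimum $\hat 0$, maximum $\hat 1$, rank function $\mathrm{rk}$ with $\mathrm{rk}(\hat 0)=0$, and $\mathrm{rk}(L)=\mathrm{rk}(\hat 1)$. $L^{\mathrm{op}}$ is $L$ with reversed order. For $y\in L$, $L^y=\{x\in L: x\ge y\}$ and $(L^{\mathrm{op}})^y=\{x\in L: x\le y\}$ ordered by the reverse of the order of $L$. For a finite ranked lattice $K$ with minimum $\hat 0_K$ and Möbius function $\mu_K$ ($\mu_K(u,u)=1$, $\sum_{u\le a\le v}\mu_K(u,a)=0$ for $u<v$), the characteristic polynomial is $\chi(K,t)=\sum_{x\in K}\mu_K(\hat 0_K,x)\,t^{\mathrm{rk}(K)-\mathrm{rk}_K(x)}$, where $\mathrm{rk}_K$ is the rank function of $K$ (with $\mathrm{rk}_K(\hat 0_K)=0$) and $\mathrm{rk}(K)$ its maximum. Let $\rho(x,y,z)=3\,\mathrm{rk}(L)-\mathrm{rk}(x)-\mathrm{rk}(y)-\mathrm{rk}(z)$, $\delta_3(x,y,z)=1$ if $x=y=z$ and $0$ otherwise, $J$ the unique integer-valued function on triples $x\le y\le z$ of $L$ with $\sum_{x\le a\le y\le b\le z}J(a,y,b)=\delta_3(x,y,z)$ for all $x\le y\le z$, and $\mathcal{M}(L,t)=\sum_{x\le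 y\le z}J(x,y,z)\,t^{\rho(x,y,z)}$. *)

From HB Require Import structures.
From mathcomp Require Import all_boot all_order all_algebra.
Set Implicit Arguments. Unset Strict Implicit. Unset Printing Implicit Defensive.
Import Order.TTheory GRing.Theory Num.Theory.

Definition covers (d : Order.disp_t) (L : finTBLatticeType d) (x y : L) : bool :=
  (x < y)%O && [forall z : L, ~~ ((x < z)%O && (z < y)%O)].

Definition ranked (d : Order.disp_t) (L : finTBLatticeType d) (rk : L -> nat) : Prop :=
  rk (\bot%O : L) = 0%N /\ (forall x y : L, covers x y -> rk y = (rk x).+1).

Definition is_mobius (T : finType) (S : {set T}) (le : rel T) (mu : T -> T -> int) : Prop :=
  (forall u, u \in S -> mu u u = 1%R) /\
  (forall u v, u \in S -> v \in S -> le u v -> u != v ->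
     (\sum_(a in S | le u a && le a v) mu u a)%R = 0%R).

Definition charpoly (T : finType) (R : unitRingType) (S : {set T})
    (mu : T -> T -> int) (m : T) (rkK : T -> nat) (t : R) : R :=
  (\sum_(x in S) (mu m x)%:~R * t ^ ((\max_(z in S) rkK z)%:Z - (rkK x)%:Z))%R.

Definition delta3 (T : eqType) (x y z : T) : int :=
  if (x == y) && (y == z) then 1%R else 0%R.

Definition rho (d : Order.disp_t) (L : finTBLatticeType d) (rk : L -> nat) (x y z : L) : int :=
  (3 * (rk \top%O)%:Z - (rk x)%:Z - (rk y)%:Z - (rk z)%:Z)%R.

Definition Mpoly (d : Order.disp_t) (L : finTBLatticeType d) (rk : L -> nat)
    (J : L -> L -> L -> int) (R : unitRingType) (t : R) : R :=
  (\sum_(x : L) \sum_(y : L) \sum_(z : L | (x <= y)%O && (y <= z)%O)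
      (J x y z)%:~R * t ^ (rho rk x y z))%R.

(* For a fixed middle element y, the defining relation of J says that
   (a, b) |-> J(a, y, b) inverts the zeta function of the product of the
   intervals [., y] and [y, .]; the product mu_{(L^op)^y}(y, a) mu_{L^y}(y, b)
   solves the same unitriangular system, so by uniqueness
   J(x, y, z) = mu_{(L^op)^y}(y, x) mu_{L^y}(y, z).  Splitting
   t^rho(x,y,z) = t^rk(L) t^(rk(L) - rk y) t^(rk(L) - rk z) (t^-1)^(rk x)
   then factors the y-th slice of M(L, t) into the two characteristic
   polynomials, L^y having rank rk(L) - rk y and (L^op)^y rank rk y. *)

From HB Require Import structures.
From mathcomp Require Import all_boot all_order all_algebra.
From mathcomp Require Import zify ring.
Import Order.TTheory GRing.Theory Num.Theory.

Set Implicit Arguments. Unset Strict Implicit.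

Local Open Scope ring_scope.
Local Open Scope order_scope.

Lemma card_subinterval_lt (disp : Order.disp_t) (T : finPOrderType disp)
    (x x' y' y : T) :
    x <= x' -> x' <= y' -> y' <= y -> (x < x') || (y' < y) ->
  (#|[set c | (x' <= c <= y')%O]| < #|[set c | (x <= c <= y)%O]|)%N.
Proof.
move=> xx' x'y' y'y strict; have xy := le_trans xx' (le_trans x'y' y'y).
apply: proper_card; apply/properP; split.
  apply/subsetP => c; rewrite !inE => /andP[x'c cy'].
  by rewrite (le_trans xx' x'c) (le_trans cy' y'y).
case/orP: strict => [lt_xx'|lt_y'y].
  by exists x; rewrite inE ?lexx ?xy ?(lt_geF lt_xx').
by exists y; rewrite inE ?lexx ?xy ?(lt_geF lt_y'y) ?andbF.
Qed.

Lemma lower_interval_sums_eq0 (disp : Order.disp_t) (T : finPOrderType disp) (V : zmodType)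
    (y : T) (f : T -> V) :
    (forall x, x <= y -> \sum_(a | x <= a <= y) f a = 0) ->
  forall x, x <= y -> f x = 0.
Proof.
move=> sum_f0.
suff f0 n (x : T) : (#|[set c | (x <= c <= y)%O]| < n)%N -> x <= y -> f x = 0.
  by move=> x; apply: f0.
elim: n x => [//|n IHn] x; rewrite ltnS => x_n xy.
have := sum_f0 x xy; rewrite (bigD1 x) /= ?lexx ?xy // big1 ?addr0 //.
move=> a /andP[/andP[xa ay] ax]; apply: IHn (ay); apply: leq_trans x_n.
by apply: card_subinterval_lt; rewrite ?lexx ?lt_def ?ax ?xa ?ay.
Qed.

Lemma upper_interval_sums_eq0 (disp : Order.disp_t) (T : finPOrderType disp) (V : zmodType)
    (y : T) (f : T -> V) :
    (forall z, y <= z -> \sum_(b | y <= b <= z) f b = 0) ->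
  forall z, y <= z -> f z = 0.
Proof.
move=> sum_f0; apply: (@lower_interval_sums_eq0 _ T^d) => z yz.
by rewrite -[RHS](sum_f0 z yz); apply: eq_bigl => b; rewrite andbC.
Qed.

Lemma rectangle_sums_eq0 (disp : Order.disp_t) (T : finPOrderType disp) (V : zmodType)
    (y : T) (h : T -> T -> V) :
    (forall x z, x <= y -> y <= z ->
       \sum_(a : T | x <= a <= y) \sum_(b : T | (y <= b <= z)%O) h a b = 0) ->
  forall x z, x <= y -> y <= z -> h x z = 0.
Proof.
move=> sum_h0 x z xy yz; apply: (upper_interval_sums_eq0 (f := h x)) yz => z' yz'.
pose g a := \sum_(b : T | (y <= b <= z')%O) h a b.
by apply: (lower_interval_sums_eq0 (f := g)) xy => x' x'y; apply: sum_h0.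
Qed.

Lemma is_mobius_interval_sum (T : finType) (S : {set T}) (le : rel T) (mu : T -> T -> int) :
    reflexive le -> antisymmetric le -> is_mobius S le mu ->
  forall u v, u \in S -> v \in S -> le u v ->
  \sum_(a in S | le u a && le a v) mu u a = (u == v)%:R.
Proof.
move=> le_refl le_anti [mu_diag mu_sum] u v uS vS uv.
have [<-|neq_uv] := eqVneq u v; last exact: mu_sum.
rewrite (big_pred1 u) ?mu_diag // => a /=.
by apply/andP/eqP => [[_ /le_anti]|->]; rewrite ?uS ?le_refl.
Qed.

Section RankedLattice.

Variables (disp : Order.disp_t) (L : finTBLatticeType disp) (rk : L -> nat).

Lemma expr_rho (R : unitRingType) (t : R) (x y z : L) : t \is a GRing.unit ->
  t ^ rho rk x y z =
  t ^+ rk \top * t ^ ((rk \top)%:Z - (rk y)%:Z) * t ^ ((rk \top)%:Z - (rk z)%:Z) *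
    t^-1 ^ (rk x)%:Z.
Proof.
move=> t_unit; rewrite exprz_inv (_ : t ^+ _ = t ^ (rk \top)%:Z) // -!exprzDr //.
by congr (_ ^ _); rewrite /rho; lia.
Qed.

Hypothesis rk_ranked : ranked rk.

Lemma ranked_lt_homo : {homo rk : x y / x < y >-> (x < y)%N}.
Proof.
have [_ rk_cover] := rk_ranked.
suff rk_lt n x y : (#|[set c | (x <= c <= y)%O]| < n)%N -> x < y -> (rk x < rk y)%N.
  by move=> x y; apply: rk_lt.
elim: n x y => [//|n IHn] x y; rewrite ltnS => xy_n xy.
have [cov_xy|] := boolP (covers x y); first by rewrite (rk_cover _ _ cov_xy).
rewrite /covers xy /= => /forallPn[z]; rewrite negbK => /andP[xz zy].
apply: (ltn_trans (IHn x z _ xz) (IHn z y _ zy)); apply: leq_trans xy_n.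
  by apply: card_subinterval_lt; rewrite ?lexx ?ltW ?zy ?orbT.
by apply: card_subinterval_lt; rewrite ?lexx ?ltW ?xz.
Qed.

Lemma ranked_le_homo : {homo rk : x y / x <= y >-> (x <= y)%N}.
Proof. exact: ltW_homo ranked_lt_homo. Qed.

Lemma charpoly_upset (R : unitRingType) (mu : L -> L -> int) (y : L) (t : R) :
  charpoly [set x | y <= x] mu y (fun x => rk x - rk y)%N t =
  \sum_(z | y <= z) (mu y z)%:~R * t ^ ((rk \top)%:Z - (rk z)%:Z).
Proof.
have rk_max : (\max_(z in [set x | (y <= x)%O]) (rk z - rk y) = rk \top - rk y)%N.
  apply/eqP; rewrite eqn_leq; apply/andP; split.
    by apply/bigmax_leqP => z _; apply/leq_sub2r/ranked_le_homo/lex1.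
  by apply: (@leq_bigmax_cond _ _ _ \top); rewrite inE lex1.
rewrite /charpoly rk_max; apply: eq_big => [z|z]; rewrite inE // => yz.
have rk_z1 : (rk z <= rk \top)%N := ranked_le_homo (lex1 z).
congr (_ * t ^ _); have := ranked_le_homo yz; lia.
Qed.

Lemma charpoly_downset (R : unitRingType) (mu : L -> L -> int) (y : L) (s : R) :
  charpoly [set x | x <= y] mu y (fun x => rk y - rk x)%N s =
  \sum_(x | x <= y) (mu y x)%:~R * s ^ (rk x)%:Z.
Proof.
have [rk_bot _] := rk_ranked.
have rk_max : (\max_(x in [set x | (x <= y)%O]) (rk y - rk x) = rk y)%N.
  apply/eqP; rewrite eqn_leq; apply/andP; split.
    by apply/bigmax_leqP => x _; apply: leq_subr.
  have := @leq_bigmax_cond _ (fun x => x \in [set x | (x <= y)%O])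
    (fun x => rk y - rk x)%N \bot.
  by rewrite rk_bot subn0; apply; rewrite inE le0x.
rewrite /charpoly rk_max; apply: eq_big => [x|x]; rewrite inE // => xy.
congr (_ * s ^ _); have := ranked_le_homo xy; lia.
Qed.

End RankedLattice.

Lemma J_mobius_factor (disp : Order.disp_t) (L : finTBLatticeType disp)
    (J : L -> L -> L -> int) (muU muD : L -> L -> L -> int) :
    (forall x y z : L, x <= y -> y <= z ->
          \sum_(a : L | x <= a <= y) \sum_(b : L | (y <= b <= z)%O) J a y b =
       delta3 x y z) ->
    (forall y : L, is_mobius [set x : L | y <= x] (fun a b => a <= b) (muU y)) ->
    (forall y : L, is_mobius [set x : L | x <= y] (fun a b => b <= a) (muD y)) ->
  forall x y z : L, x <= y -> y <= z -> J x y z = muD y y x * muU y y z.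
Proof.
move=> J_sum muU_mobius muD_mobius x y z xy yz.
have muU_sum z' : y <= z' -> \sum_(b | y <= b <= z') muU y y b = (y == z')%:R.
  move=> yz'; rewrite -(is_mobius_interval_sum lexx le_anti (muU_mobius y)) ?inE //.
  by apply: eq_bigl => b; rewrite inE andbA andbb.
have muD_sum x' : x' <= y -> \sum_(a | x' <= a <= y) muD y y a = (x' == y)%:R.
  move=> x'y; rewrite eq_sym.
  have muD_sum := is_mobius_interval_sum (le := fun a b => b <= a) lexx ge_anti (muD_mobius y).
  rewrite -muD_sum ?inE //.
  by apply: eq_bigl => a; rewrite inE andbA andbb andbC.
apply/eqP; rewrite -subr_eq0; apply/eqP.
pose h a b := J a y b - muD y y a * muU y y b.
apply: (rectangle_sums_eq0 (y := y) (h := h)) => // x' z' x'y yz'.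
under eq_bigr do rewrite sumrB.
rewrite sumrB J_sum // -big_distrlr /= muD_sum // muU_sum //.
by rewrite /delta3; case: (x' == y); case: (y == z'); rewrite subrr.
Qed.

Theorem proposition6p10 (d : Order.disp_t) (L : finTBLatticeType d) (rk : L -> nat)
  (J : L -> L -> L -> int) (muU muD : L -> L -> L -> int)
  (R : comUnitRingType) (t : R) :
  ranked rk ->
  (forall x y z : L, (x <= y)%O -> (y <= z)%O ->
     (\sum_(a : L | (x <= a)%O && (a <= y)%O)
        \sum_(b : L | (y <= b)%O && (b <= z)%O) J a y b)%R = delta3 x y z) ->
  (forall y : L, is_mobius [set x : L | (y <= x)%O] (fun a b => (a <= b)%O) (muU y)) ->
  (forall y : L, is_mobius [set x : L | (x <= y)%O] (fun a b => (b <= a)%O) (muD y)) ->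
  t \is a GRing.unit ->
  Mpoly rk J t =
  (t ^+ (rk \top%O) *
   \sum_(y : L) t ^ ((rk \top%O)%:Z - (rk y)%:Z) *
     charpoly [set x : L | (y <= x)%O] (muU y) y (fun x => (rk x - rk y)%N) t *
     charpoly [set x : L | (x <= y)%O] (muD y) y (fun x => (rk y - rk x)%N) t^-1)%R.
Proof.
move=> rk_ranked J_sum muU_mobius muD_mobius t_unit.
rewrite /Mpoly exchange_big /= mulr_sumr; apply: eq_bigr => y _.
rewrite charpoly_upset // charpoly_downset // -!mulrA [X in t ^+ _ * (_ * X)]mulrC.
rewrite big_distrlr /= !mulr_sumr.
rewrite [RHS]big_mkcond; apply: eq_bigr => x _.
have [xy|xNy] := boolP (x <= y)%O; last by rewrite big_pred0 // => z; rewrite (negbTE xNy).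
rewrite !mulr_sumr; apply: eq_bigr => z /andP[_ yz].
rewrite (J_mobius_factor J_sum muU_mobius muD_mobius xy yz) intrM expr_rho //.
ring.
Qed.
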